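(* Let $(X,d)$ be a non-empty complete metric space and let $T:X\to X$ be a strong contraction mapping. Let $x_0\in X$ be arbitrary and define the sequence $(x_i)_{i\ge0}$ by $x_i=T(x_{i-1})$ for $i\ge1$. Then $(x_i)$ is a Cauchy sequence in $(X,d)$, and hence converges to a limit $x^*\in X$.
   Context: For a subset $A$ of a metric space $(X,d)$, its diameter is $D(A):=\sup\{d(x,y): x,y\in A\}$. Given a self-map $T:X\to X$, set $X_0:=X$ and $X_{i+1}:=T(X_i)$ for $i\ge 0$. The map $T$ is called a strong contraction mapping if $X_{i+1}\subseteq X_i$ for all $i\ge0$ and there exists $q\in[0,1)$ such that $D(X_{i+1})\le q\,D(X_i)$ for all $i\ge 0$. *)

From Stdlib Require Import Reals.
Open Scope R_scope.

Section MetricDefs.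
Variables (X : Type) (d : X -> X -> R).

Definition is_metric : Prop :=
  (forall x y, 0 <= d x y) /\
  (forall x y, d x y = 0 <-> x = y) /\
  (forall x y, d x y = d y x) /\
  (forall x y z, d x z <= d x y + d y z).

Definition cauchy_seq (u : nat -> X) : Prop :=
  forall eps, 0 < eps ->
    exists N : nat, forall m n, (N <= m)%nat -> (N <= n)%nat -> d (u m) (u n) < eps.

Definition converges_to (u : nat -> X) (l : X) : Prop :=
  forall eps, 0 < eps -> exists N : nat, forall n, (N <= n)%nat -> d (u n) l < eps.

Definition complete_metric : Prop :=
  forall u : nat -> X, cauchy_seq u -> exists l, converges_to u l.

Definition is_diameter (A : X -> Prop) (r : R) : Prop :=
  is_lub (fun s => exists x y, A x /\ A y /\ s = d x y) r.

Fixpoint iter_image (T : X -> X) (i : nat) : X -> Prop :=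
  match i with
  | O => fun _ => True
  | S j => fun y => exists x, iter_image T j x /\ y = T x
  end.

Definition strong_contraction (T : X -> X) : Prop :=
  (forall i x, iter_image T (S i) x -> iter_image T i x) /\
  exists q, 0 <= q < 1 /\
    forall i, exists Di Di1,
      is_diameter (iter_image T i) Di /\
      is_diameter (iter_image T (S i)) Di1 /\
      Di1 <= q * Di.

End MetricDefs.

Arguments is_metric {X} d.
Arguments cauchy_seq {X} d u.
Arguments converges_to {X} d u l.
Arguments complete_metric {X} d.
Arguments is_diameter {X} d A r.
Arguments iter_image {X} T i _.
Arguments strong_contraction {X} d T.

(* Every orbit point x_j with j >= i lies in X_i, so d(x_m, x_n) <= D(X_N) for
   m, n >= N, and D(X_N) <= q^N D(X_0) tends to 0.  Completeness then yields
   the limit. *)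

From Stdlib Require Import Reals Lra Lia.
Open Scope R_scope.

Section NestedSets.
Variables (X : Type) (d : X -> X -> R).

Lemma diameter_ge_dist (A : X -> Prop) (r : R) (a b : X) :
  is_diameter d A r -> A a -> A b -> d a b <= r.
Proof. intros [Hub _] Ha Hb. apply Hub. exists a, b. auto. Qed.

Lemma diameter_ge0 (A : X -> Prop) (r : R) (a : X) :
  (forall x y, 0 <= d x y) -> is_diameter d A r -> A a -> 0 <= r.
Proof.
  intros Hpos Hr Ha. apply Rle_trans with (d a a); auto.
  exact (diameter_ge_dist A r a a Hr Ha Ha).
Qed.

Lemma decreasing_sets_antitone (A : nat -> X -> Prop) :
  (forall i y, A (S i) y -> A i y) ->
  forall i j y, (i <= j)%nat -> A j y -> A i y.
Proof. intros Hsub i j y Hij. induction Hij; auto. Qed.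

Lemma cauchy_of_nested_diameters (A : nat -> X -> Prop) (u : nat -> X) :
  (forall i y, A (S i) y -> A i y) ->
  (forall i, A i (u i)) ->
  (forall eps, 0 < eps -> exists N r, is_diameter d (A N) r /\ r < eps) ->
  cauchy_seq d u.
Proof.
  intros Hsub Hu Hdiam eps Heps.
  destruct (Hdiam eps Heps) as [N [r [Hr Hlt]]].
  exists N. intros m n Hm Hn.
  apply Rle_lt_trans with r; trivial.
  apply (diameter_ge_dist (A N)); trivial.
  - exact (decreasing_sets_antitone A Hsub N m (u m) Hm (Hu m)).
  - exact (decreasing_sets_antitone A Hsub N n (u n) Hn (Hu n)).
Qed.

End NestedSets.

Lemma exists_pow_mul_lt (q C eps : R) :
  0 <= q < 1 -> 0 <= C -> 0 < eps -> exists N, q ^ N * C < eps.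
Proof.
  intros Hq HC Heps.
  assert (Hq_abs : Rabs q < 1) by (rewrite Rabs_right; lra).
  assert (Hpos : 0 < eps / (C + 1)) by (apply Rdiv_lt_0_compat; lra).
  destruct (pow_lt_1_zero q Hq_abs _ Hpos) as [N HN].
  exists N. specialize (HN N (le_n N)).
  assert (HqN : 0 <= q ^ N) by (apply pow_le; lra).
  rewrite Rabs_right in HN by lra.
  apply Rle_lt_trans with (q ^ N * (C + 1)); [nra|].
  replace eps with (eps / (C + 1) * (C + 1)) by (field; lra).
  apply Rmult_lt_compat_r; lra.
Qed.

Section StrongContraction.
Variables (X : Type) (d : X -> X -> R) (T : X -> X).

Lemma orbit_in_iter_image (u : nat -> X) :
  (forall i, u (S i) = T (u i)) -> forall i, iter_image T i (u i).
Proof. intros Hu i. induction i; simpl; eauto. Qed.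

Lemma iter_image_diameter_le_pow (q D0 : R) :
  0 <= q ->
  (forall i, exists Di Di1,
     is_diameter d (iter_image T i) Di /\
     is_diameter d (iter_image T (S i)) Di1 /\ Di1 <= q * Di) ->
  is_diameter d (iter_image T 0) D0 ->
  forall i r, is_diameter d (iter_image T i) r -> r <= q ^ i * D0.
Proof.
  intros Hq HD HD0 i. induction i as [|i IH]; intros r Hr.
  - rewrite (is_lub_u _ _ _ Hr HD0). simpl; lra.
  - destruct (HD i) as [Di [Di1 [HDi [HDi1 Hle]]]].
    rewrite (is_lub_u _ _ _ Hr HDi1). simpl. rewrite Rmult_assoc.
    apply Rle_trans with (q * Di); auto.
    apply Rmult_le_compat_l; auto.
Qed.

End StrongContraction.

Theorem lemma1 (X : Type) (d : X -> X -> R)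
  (Hmetric : is_metric d) (Hne : inhabited X) (Hcomplete : complete_metric d)
  (T : X -> X) (HT : strong_contraction d T)
  (x : nat -> X) (Hx : forall i, x (S i) = T (x i)) :
  cauchy_seq d x /\ exists xstar : X, converges_to d x xstar.
Proof.
  destruct Hmetric as [Hpos _].
  destruct HT as [Hsub [q [Hq HD]]].
  destruct Hne as [a].
  destruct (HD 0%nat) as [D0 [_ [HD0 _]]].
  assert (HD0_ge0 : 0 <= D0) by (apply (diameter_ge0 X d (iter_image T 0) D0 a); simpl; auto).
  assert (Hc : cauchy_seq d x).
  { apply (cauchy_of_nested_diameters X d (iter_image T)); auto.
    - exact (orbit_in_iter_image X T x Hx).
    - intros eps Heps.
      destruct (exists_pow_mul_lt q D0 eps Hq HD0_ge0 Heps) as [N HN].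
      destruct (HD N) as [DN [_ [HDN _]]].
      exists N, DN. split; trivial.
      apply Rle_lt_trans with (q ^ N * D0); trivial.
      apply (iter_image_diameter_le_pow X d T q D0); tauto. }
  split; auto.
Qed.
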